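(* For the hypercube $Q_n$: $str(Q_2)\ge6$, $str(Q_3)\ge11$, $str(Q_4)\ge21$, and $str(Q_n)\ge 2^n+4n-12$ for all $n\ge5$.
   Context: $Q_n$ is the $n$-dimensional hypercube (vertex set $\mathbb Z_2^n$, adjacency iff differing in exactly one coordinate), of order $2^n$. For a graph $G$ of order $p$, a numbering is a bijection $f:V(G)\to[1,p]$; $str_f(G)=\max\{f(u)+f(v): uv\in E(G)\}$ and $str(G)=\min_f str_f(G)$. *)

From mathcomp Require Import all_boot all_order.
Set Implicit Arguments. Unset Strict Implicit. Unset Printing Implicit Defensive.

Definition hvert (n : nat) := {ffun 'I_n -> bool}.

Definition hadj (n : nat) (u v : hvert n) : bool :=
  #|[set i : 'I_n | u i != v i]| == 1.

(* A numbering of a graph on a finite vertex type V of order p = #|V|: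
   a bijection f : V -> [1, p].  We represent it as an injective
   g : V -> 'I_p (hence bijective), with f x = g x + 1. *)
Definition numbering (V : finType) := {ffun V -> 'I_#|V|}.

Definition is_numbering (V : finType) (g : numbering V) : bool := injectiveb g.

Definition numv (V : finType) (g : numbering V) (x : V) : nat := (g x).+1.

Definition strf (V : finType) (e : rel V) (g : numbering V) : nat :=
  \max_(u : V) \max_(v : V | e u v) (numv g u + numv g v).

(* str(G) = min over numberings f of str_f(G).  The default value
   2 * #|V| is an upper bound for every str_f, so it does not affect
   the minimum (the set of numberings is nonempty). *)
Definition strength (V : finType) (e : rel V) : nat :=
  \big[minn/(2 * #|V|)]_(g : numbering V | is_numbering g) strf e g.

Definition str_hypercube (n : nat) : nat := strength (@hadj n).

From mathcomp Require Import all_boot all_order.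
From mathcomp Require Import zify.
Set Implicit Arguments. Unset Strict Implicit.

(* Fix a numbering f with strength s = str_f(Q_n), and let y_1, ..., y_k be
   the vertices carrying the k largest labels p, p-1, ..., p-k+1.  Every
   neighbour x of some y_j satisfies f(x) <= s - f(y_j) <= s - p + k - 1, and
   distinct vertices carry distinct labels, so the union N of the
   neighbourhoods of y_1, ..., y_k has at most s - p + k - 1 elements.
   It remains to bound |N| from below using the geometry of Q_n:
   - every neighbourhood has n elements            (k = 1: s >= p + n);
   - two distinct neighbourhoods share <= 2 vertices (k = 2: s >= p + 2n - 3);
   - if three neighbourhoods pairwise meet, they have a common vertex, which
     by inclusion-exclusion gives |N| >= 4n - 9     (k = 4: s >= p + 4n - 12). *)

Lemma xor_indicators_two_points (T : eqType) (i a c e f : T) :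
  i != a -> i != c -> a != c ->
  (i == e) (+) (i == f) -> (a == e) (+) (a == f) -> (c == e) (+) (c == f) ->
  False.
Proof.
move=> /eqP ia /eqP ic /eqP ac.
case: (i =P e) => ?; case: (i =P f) => ?; case: (a =P e) => ?;
  case: (a =P f) => ?; case: (c =P e) => ?; case: (c =P f) => ? //= _ _ _;
  congruence.
Qed.

Section Hypercube.
Variable n : nat.
Implicit Types u v w x : hvert n.

Definition flip u (i : 'I_n) : hvert n := [ffun j => u j (+) (j == i)].

Definition nb u : {set hvert n} := [set x | hadj u x].

Lemma flipC u i j : flip (flip u i) j = flip (flip u j) i.
Proof.
by apply/ffunP => k; rewrite !ffunE; case: (u k); case: (k == i); case: (k == j).
Qed.

Lemma flipK u i : flip (flip u i) i = u.
Proof. by apply/ffunP => k; rewrite !ffunE; case: (u k); case: (k == i). Qed.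

Lemma flip_inj u : injective (flip u).
Proof.
move=> i j /(congr1 (fun z : hvert n => z i)); rewrite !ffunE eqxx.
by case: (u i); case: eqP.
Qed.

Lemma hadj_sym u x : hadj u x = hadj x u.
Proof.
rewrite /hadj (_ : [set i | u i != x i] = [set i | x i != u i]) //.
by apply/setP => i; rewrite !inE eq_sym.
Qed.

Lemma hadjP u x : reflect (exists i, x = flip u i) (hadj u x).
Proof.
apply: (iffP idP).
- rewrite /hadj => /cards1P [i Hi]; exists i; apply/ffunP => j.
  have := congr1 (fun S : {set 'I_n} => j \in S) Hi.
  by rewrite !inE ffunE; case: (u j); case: (x j) => <-.
- move=> [i ->]; rewrite /hadj (_ : [set j | u j != flip u i j] = [set i]).
    by rewrite cards1.
  by apply/setP => j; rewrite !inE ffunE; case: (u j); case: (j == i).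
Qed.

Lemma flip_nb u i : flip u i \in nb u.
Proof. by rewrite inE; apply/hadjP; exists i. Qed.

Lemma card_nb u : #|nb u| = n.
Proof.
have -> : nb u = flip u @: [set: 'I_n].
  apply/setP => x; rewrite inE; apply/hadjP/imsetP.
  - by move=> [i ->]; exists i.
  - by move=> [i _ ->]; exists i.
by rewrite card_imset ?cardsT ?card_ord //; apply: flip_inj.
Qed.

Lemma common_nb_shape u v x : u != v -> x \in nb u -> x \in nb v ->
  exists i j, [/\ i != j, x = flip u i & v = flip (flip u i) j].
Proof.
rewrite !inE => Huv /hadjP [i ->]; rewrite hadj_sym => /hadjP [j Hv].
exists i, j; split=> //.
by apply: contraNneq Huv => Eij; rewrite Hv Eij flipK.
Qed.

(* Distinct vertices of Q_n have at most two common neighbours: once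
   v = u + e_i + e_j, only u + e_i and u + e_j qualify. *)
Lemma card_common_nb u v : u != v -> #|nb u :&: nb v| <= 2.
Proof.
move=> Huv; have [-> | [x]] := set_0Vmem (nb u :&: nb v); first by rewrite cards0.
move=> /setIP [Hxu Hxv]; have [i [j [_ _ Hv]]] := common_nb_shape Huv Hxu Hxv.
apply: (@leq_trans #|flip u @: [set i; j]|); last first.
  by apply: leq_trans (leq_imset_card _ _) _; rewrite cards2; case: (i != j).
apply/subset_leq_card/subsetP => y /setIP [Hyu Hyv].
have [i' [j' [Hij' Hy Hv']]] := common_nb_shape Huv Hyu Hyv.
apply/imsetP; exists i' => //.
move: (congr1 (fun z : hvert n => z i') (etrans (esym Hv) Hv')).
rewrite !ffunE eqxx (negbTE Hij') !inE.
by case: (u i'); case: (i' == i); case: (i' == j).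
Qed.

Lemma flip_common_nb u i a c :
  [/\ flip u i \in nb u, flip u i \in nb (flip (flip u i) a)
    & flip u i \in nb (flip (flip u i) c)].
Proof.
rewrite flip_nb !inE !(hadj_sym (flip (flip u i) _)).
by split=> //; apply/hadjP; eexists.
Qed.

(* Writing v = u + e_i + e_a and w = u + e_c + e_d, the vertex
   v + w = e_i + e_a + e_c + e_d has weight 2, so {i, a} and {c, d} share an
   index k, and u + e_k is the common neighbour. *)
Lemma common_nb3 u v w : u != v -> u != w -> v != w ->
  nb u :&: nb v != set0 -> nb u :&: nb w != set0 -> nb v :&: nb w != set0 ->
  exists x, [/\ x \in nb u, x \in nb v & x \in nb w].
Proof.
move=> Huv Huw Hvw /set0Pn [x1 /setIP [H1 H2]] /set0Pn [x2 /setIP [H3 H4]]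
  /set0Pn [x3 /setIP [H5 H6]].
have [i [a [Hia _ Hv]]] := common_nb_shape Huv H1 H2.
have [c [d [Hcd _ Hw]]] := common_nb_shape Huw H3 H4.
have [e [f [_ _ Hw']]] := common_nb_shape Hvw H5 H6.
(* Coordinatewise, v + w computed from u equals v + w computed from v. *)
have sum_vw k : (k == i) (+) (k == a) (+) (k == e) (+) (k == f)
                = (k == c) (+) (k == d).
  move: (congr1 (fun z : hvert n => z k) (etrans (esym Hw) Hw')).
  by rewrite Hv !ffunE -!addbA; case: (u k) => //= /negb_inj.
clear Hw'; subst v w.
(* If {i, a} and {c, d} were disjoint, the three distinct indices i, a, c
   would all lie in the support of e_e + e_f. *)
have shared : [|| i == c, i == d, a == c | a == d].
  apply/negPn/negP; rewrite !negb_or => /and4P [/negbTE ic /negbTE id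
     /negbTE ac /negbTE ad].
  apply: (@xor_indicators_two_points _ i a c e f Hia); [by rewrite ic | by rewrite ac | | | ].
  - by have := sum_vw i; rewrite eqxx ic id (negbTE Hia); case: (i == e); case: (i == f).
  - by have := sum_vw a; rewrite eqxx ac ad (eq_sym a i) (negbTE Hia);
      case: (a == e); case: (a == f).
  - by have := sum_vw c; rewrite eqxx (negbTE Hcd) (eq_sym c i) ic (eq_sym c a) ac;
      case: (c == e); case: (c == f).
case/or4P: shared => /eqP E; [subst c | subst d | subst c | subst d].
- by have [? ? ?] := flip_common_nb u i a d; exists (flip u i).
- by rewrite [flip (flip u c) i]flipC; have [? ? ?] := flip_common_nb u i a c;
    exists (flip u i).
- by rewrite [flip (flip u i) a]flipC; have [? ? ?] := flip_common_nb u a i d;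
    exists (flip u a).
- by rewrite [flip (flip u i) a]flipC [flip (flip u c) a]flipC;
    have [? ? ?] := flip_common_nb u a i c; exists (flip u a).
Qed.

End Hypercube.

Lemma cardsU3 (T : finType) (A B C : {set T}) :
  #|A :|: B :|: C| + (#|A :&: B| + #|A :&: C| + #|B :&: C|) =
  #|A| + #|B| + #|C| + #|A :&: B :&: C|.
Proof.
have := cardsUI (A :|: B) C; rewrite setIUl.
have := cardsUI (A :&: C) (B :&: C); rewrite setIACA setIid.
have := cardsUI A B; lia.
Qed.

(* By inclusion-exclusion the
   defect 4n - |A u B u C u D| is at most (sum of pairs) - (sum of triples)
   + |ABCD|; when five or six pairs meet, at least two triples are nonempty,
   and a nonempty ABCD makes all four triples nonempty. *)
Lemma card_union4_lb (T : finType) (A B C D : {set T}) n :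
  #|A| = n -> #|B| = n -> #|C| = n -> #|D| = n ->
  #|A :&: B| <= 2 -> #|A :&: C| <= 2 -> #|A :&: D| <= 2 ->
  #|B :&: C| <= 2 -> #|B :&: D| <= 2 -> #|C :&: D| <= 2 ->
  (0 < #|A :&: B| -> 0 < #|A :&: C| -> 0 < #|B :&: C| -> 0 < #|A :&: B :&: C|) ->
  (0 < #|A :&: B| -> 0 < #|A :&: D| -> 0 < #|B :&: D| -> 0 < #|A :&: B :&: D|) ->
  (0 < #|A :&: C| -> 0 < #|A :&: D| -> 0 < #|C :&: D| -> 0 < #|A :&: C :&: D|) ->
  (0 < #|B :&: C| -> 0 < #|B :&: D| -> 0 < #|C :&: D| -> 0 < #|B :&: C :&: D|) ->
  4 * n <= #|A :|: B :|: C :|: D| + 9.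
Proof.
move=> hA hB hC hD pAB pAC pAD pBC pBD pCD tABC tABD tACD tBCD.
have UD := cardsUI (A :|: B :|: C) D; rewrite !setIUl in UD.
have U3 := cardsU3 A B C.
have U3D := cardsU3 (A :&: D) (B :&: D) (C :&: D).
have setIDD (X Y : {set T}) : (X :&: D) :&: (Y :&: D) = X :&: Y :&: D.
  by rewrite setIACA setIid.
rewrite !setIDD in U3D.
have qABC : #|A :&: B :&: C :&: D| <= #|A :&: B :&: C|.
  exact/subset_leq_card/subsetIl.
have qABD : #|A :&: B :&: C :&: D| <= #|A :&: B :&: D|.
  exact/subset_leq_card/setSI/subsetIl.
have qACD : #|A :&: B :&: C :&: D| <= #|A :&: C :&: D|.
  exact/subset_leq_card/setSI/setSI/subsetIl.
have qBCD : #|A :&: B :&: C :&: D| <= #|B :&: C :&: D|.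
  by apply/subset_leq_card/setSI; rewrite -setIA subsetIr.
lia.
Qed.

Lemma card_hvert n : #|hvert n| = 2 ^ n.
Proof. by rewrite card_ffun card_bool card_ord. Qed.

Section Labelling.
Variable n : nat.
Local Notation V := (hvert n).
Local Notation p := #|V|.
Variable g : numbering V.
Hypothesis g_inj : injective g.
Local Notation s := (strf (@hadj n) g).

Lemma edge_sum_le (y x : V) : hadj y x -> numv g y + numv g x <= s.
Proof.
move=> Hyx; apply: leq_trans (leq_bigmax y).
exact: (@leq_bigmax_cond _ (hadj y) (fun v => numv g y + numv g v) x Hyx).
Qed.

Lemma label_onto (j : nat) : j < p -> exists y, nat_of_ord (g y) = j.
Proof.
move=> Hj; have := inj_card_onto g_inj (eq_leq (card_ord _)) (Ordinal Hj).
by case/codomP => y Hy; exists y; rewrite -Hy.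
Qed.

Lemma label_neq (y y' : V) (i j : nat) :
  nat_of_ord (g y) = i -> nat_of_ord (g y') = j -> i != j -> y != y'.
Proof. by move=> <- <-; apply: contra_neq => ->. Qed.

(* The key counting step: if every vertex of N is adjacent to a vertex
   carrying one of the k largest labels, then the labels of N are distinct
   values in [1, s + k - p - 1], so #|N| <= s + k - p - 1. *)
Lemma card_nb_top_le (N : {set V}) k :
  (forall x, x \in N -> exists y, hadj y x /\ p <= g y + k) ->
  #|N| <= s + k - p - 1.
Proof.
move=> HN.
rewrite cardE -(size_map (fun x => nat_of_ord (g x))) -(size_iota 0 (s + k - p - 1)).
apply: uniq_leq_size.
  by rewrite map_inj_uniq ?enum_uniq // => x1 x2 /ord_inj; apply: g_inj.
move=> z /mapP [x]; rewrite mem_enum => /HN [y [Hyx Hy]] ->.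
by have := edge_sum_le Hyx; rewrite /numv mem_iota; lia.
Qed.

Lemma strf_top1 : 1 <= n -> 2 ^ n + n <= s.
Proof.
rewrite -card_hvert => Hn; have Hp : 0 < p by rewrite card_hvert expn_gt0.
have [y1 H1] := label_onto (j := p - 1) ltac:(lia).
suff: #|nb y1| <= s + 1 - p - 1 by rewrite card_nb; lia.
by apply: card_nb_top_le => x; rewrite inE => Hx; exists y1; split=> //; lia.
Qed.

Lemma strf_top2 : 2 <= n -> 2 ^ n + 2 * n <= s + 3.
Proof.
move=> Hn; have Hp : 2 <= p.
  by rewrite card_hvert (leq_trans _ (leq_pexp2l _ (ltnW Hn))).
rewrite -card_hvert.
have [y1 H1] := label_onto (j := p - 1) ltac:(lia).
have [y2 H2] := label_onto (j := p - 2) ltac:(lia).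
have y12 : y1 != y2 by apply: label_neq H1 H2 _; lia.
have := cardsUI (nb y1) (nb y2); rewrite !card_nb.
have := card_common_nb y12.
suff: #|nb y1 :|: nb y2| <= s + 2 - p - 1 by lia.
apply: card_nb_top_le => x; rewrite !inE => /orP [] Hx;
  [exists y1 | exists y2]; split=> //; lia.
Qed.

(* Pairwise-meeting neighbourhoods of three distinct vertices have a
   common vertex, in the cardinality form used by [card_union4_lb]. *)
Lemma card_common_nb3 (u v w : V) : u != v -> u != w -> v != w ->
  0 < #|nb u :&: nb v| -> 0 < #|nb u :&: nb w| -> 0 < #|nb v :&: nb w| ->
  0 < #|nb u :&: nb v :&: nb w|.
Proof.
move=> Huv Huw Hvw; rewrite !card_gt0 => Iuv Iuw Ivw.
have [x [Xu Xv Xw]] := common_nb3 Huv Huw Hvw Iuv Iuw Ivw.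
by apply/set0Pn; exists x; rewrite !in_setI Xu Xv Xw.
Qed.

Lemma strf_top4 : 3 <= n -> 2 ^ n + 4 * n <= s + 12.
Proof.
move=> Hn; have Hp : 4 <= p.
  by rewrite card_hvert (leq_trans _ (leq_pexp2l _ (ltnW Hn))).
rewrite -card_hvert.
have [y1 H1] := label_onto (j := p - 1) ltac:(lia).
have [y2 H2] := label_onto (j := p - 2) ltac:(lia).
have [y3 H3] := label_onto (j := p - 3) ltac:(lia).
have [y4 H4] := label_onto (j := p - 4) ltac:(lia).
have y12 : y1 != y2 by apply: label_neq H1 H2 _; lia.
have y13 : y1 != y3 by apply: label_neq H1 H3 _; lia.
have y14 : y1 != y4 by apply: label_neq H1 H4 _; lia.
have y23 : y2 != y3 by apply: label_neq H2 H3 _; lia.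
have y24 : y2 != y4 by apply: label_neq H2 H4 _; lia.
have y34 : y3 != y4 by apply: label_neq H3 H4 _; lia.
have := card_union4_lb (card_nb y1) (card_nb y2) (card_nb y3) (card_nb y4)
  (card_common_nb y12) (card_common_nb y13) (card_common_nb y14)
  (card_common_nb y23) (card_common_nb y24) (card_common_nb y34)
  (card_common_nb3 y12 y13 y23) (card_common_nb3 y12 y14 y24)
  (card_common_nb3 y13 y14 y34) (card_common_nb3 y23 y24 y34).
suff: #|nb y1 :|: nb y2 :|: nb y3 :|: nb y4| <= s + 4 - p - 1 by lia.
apply: card_nb_top_le => x; rewrite !inE => /orP [/orP [/orP [] | ] | ] Hx;
  [exists y1 | exists y2 | exists y3 | exists y4]; split=> //; lia.
Qed.

End Labelling.

(* To bound str(Q_n) from below it suffices to bound every str_f; the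
   default value 2p of the minimum is harmless as long as L <= 2p. *)
Lemma str_hypercube_ge n L : L <= 2 * 2 ^ n ->
  (forall g : numbering (hvert n), injective g -> L <= strf (@hadj n) g) ->
  L <= str_hypercube n.
Proof.
move=> L_le H; apply: (big_ind (fun x => L <= x)).
- by rewrite card_hvert.
- by move=> x y Hx Hy; rewrite leq_min Hx Hy.
- by move=> g /injectiveP; apply: H.
Qed.

Lemma four_mul_le_exp2 n : 4 <= n -> 4 * n <= 2 ^ n.
Proof.
elim: n => [|n IH] //; rewrite ltnS leq_eqVlt => /orP [/eqP <- //|Hn].
by rewrite expnS; have := IH Hn; lia.
Qed.

Theorem mainTheorem17 :
  6 <= str_hypercube 2 /\ 11 <= str_hypercube 3 /\ 21 <= str_hypercube 4 /\
  (forall n : nat, 5 <= n -> 2 ^ n + 4 * n - 12 <= str_hypercube n).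
Proof.
split; [|split; [|split]].
- by apply: str_hypercube_ge => // g g_inj; apply: (strf_top1 g_inj).
- by apply: str_hypercube_ge => // g g_inj; apply: (strf_top1 g_inj).
- apply: str_hypercube_ge => // g g_inj.
  by have := strf_top2 g_inj isT; lia.
- move=> n Hn; have exp_ge := four_mul_le_exp2 (ltnW Hn).
  apply: str_hypercube_ge => [|g g_inj]; first lia.
  by have := strf_top4 g_inj (ltnW (ltnW Hn)); lia.
Qed.
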